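(* Under the standing assumptions, let $t$ be a task of type 2 with intermediate task $i$ with respect to a demand vector $\vec v$, and suppose $\vec v$ has at least one unit of demand in each of two tasks $s_1,s_2$, both distinct from $t$ and $i$. Let $\vec v'$ be the demand vector such that $(\vec v,\vec v')$ is $(i,t)$-adjacent. Then $(\vec v,\vec v')$ has switching cost $1$.
   Context: Standing assumptions: $n\ge 4$, $k\ge 5$, and $f_1,\dots,f_n$ are functions from demand vectors to $[k]$ satisfying the demand (for every demand vector $\vec v$ and task $j$, exactly $v_j$ agents $a$ have $f_a(\vec v)=j$), with maximum switching cost at most $2$. A demand vector is $\vec v=(v_1,\dots,v_k)$ of non-negative integers with $\sum v_j=n$; task $j$ is non-empty in $\vec v$ if $v_j\ge1$. The switching cost of $(\vec v,\vec v')$ is the number of agents $a$ with $f_a(\vec v)\ne f_a(\vec v')$; $\vec v,\vec v'$ are adjacent if $\|\vec v-\vec v'\|_1=2$. An ordered pair $(\vec v_1,\vec v_2)$ is $(s,t)$-adjacent if $s\ne t$ and $\vec v_2$ is obtained from $\vec v_1$ by moving one unit of demand from task $s$ to task $t$. Agent $a$ is $(i,j)$-mobile with respect to $(\vec v_1,\vec v_2)$ if $f_a(\vec v_1)=i$, $f_a(\vec v_2)=j$, $i\ne j$. If $(\vec v_1,\vec v_2)$ is $(s,t)$-adjacent with switching cost $2$, then there is a task $i\notin\{s,t\}$ such that one switching agent is $(s,i)$-mobile and the other is $(i,t)$-mobile; $i$ is called the intermediate task of $(\vec v_1,\vec v_2)$. A task $t$ is of type 1 with respect to $\vec v$ if for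 every task $s\ne t$ non-empty in $\vec v$, the $(s,t)$-adjacent pair starting at $\vec v$ has switching cost $1$. A task $t$ is of type 2 with respect to $\vec v$ if there exist a task $i$ and an agent $a$ such that for every task $s\notin\{i,t\}$ non-empty in $\vec v$, the $(s,t)$-adjacent pair starting at $\vec v$ has switching cost $2$, intermediate task $i$, and $(i,t)$-mobile agent $a$; then $i$ is the intermediate task of $t$ with respect to $\vec v$. *)

From mathcomp Require Import all_boot.
Set Implicit Arguments. Unset Strict Implicit. Unset Printing Implicit Defensive.

Definition dvec (k : nat) := {ffun 'I_k -> nat}.

Definition is_demand (n k : nat) (v : dvec k) : bool := \sum_(j < k) v j == n.

Definition alloc (n k : nat) := 'I_n -> dvec k -> 'I_k.

Definition satisfies_demand (n k : nat) (f : alloc n k) : Prop :=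
  forall v : dvec k, is_demand n v ->
    forall j : 'I_k, #|[set a : 'I_n | f a v == j]| = v j.

Definition sw_cost (n k : nat) (f : alloc n k) (v v' : dvec k) : nat :=
  #|[set a : 'I_n | f a v != f a v']|.

Definition l1dist (k : nat) (v v' : dvec k) : nat :=
  \sum_(j < k) (maxn (v j) (v' j) - minn (v j) (v' j)).

Definition adjacent (k : nat) (v v' : dvec k) : Prop := l1dist v v' = 2.

Definition max_sw_cost_le (n k : nat) (f : alloc n k) (c : nat) : Prop :=
  forall v v' : dvec k, is_demand n v -> is_demand n v' -> adjacent v v' ->
    sw_cost f v v' <= c.

Definition st_adjacent (k : nat) (s t : 'I_k) (v1 v2 : dvec k) : Prop :=
  s != t /\ 0 < v1 s /\ v2 s = (v1 s).-1 /\ v2 t = (v1 t).+1 /\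
  (forall j : 'I_k, j != s -> j != t -> v2 j = v1 j).

Definition mobile (n k : nat) (f : alloc n k) (a : 'I_n) (i j : 'I_k)
    (v1 v2 : dvec k) : Prop :=
  f a v1 = i /\ f a v2 = j /\ i != j.

Definition cost2_interm_by (n k : nat) (f : alloc n k) (s t i : 'I_k)
    (a : 'I_n) (v1 v2 : dvec k) : Prop :=
  sw_cost f v1 v2 = 2 /\ i != s /\ i != t /\
  (exists b : 'I_n, mobile f b s i v1 v2) /\ mobile f a i t v1 v2.

Definition type2_with (n k : nat) (f : alloc n k) (v : dvec k) (t i : 'I_k) : Prop :=
  exists a : 'I_n, forall s : 'I_k, s != i -> s != t -> 0 < v s ->
    forall v' : dvec k, st_adjacent s t v v' -> cost2_interm_by f s t i a v v'.

From mathcomp Require Import all_boot zify.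
Set Implicit Arguments. Unset Strict Implicit. Unset Printing Implicit Defensive.

(* The switching cost of an (i,t)-adjacent pair is at least 1,
   since the number of agents on t must grow, and at most 2 by hypothesis.
   If it were 2, the two switching agents would form an exchange through an
   intermediate task j outside {i,t}: an agent c goes i -> j and an agent d
   goes j -> t.  Pick s in {s1, s2} with s <> j and let u be v with one unit
   moved from s to t.  Since t is of type 2 with intermediate i, the pair
   (v,u) is realised by agent a going i -> t and an agent b going s -> i,
   all others fixed.  But (w,u), with w the (i,t)-move of v, is an
   (s,i)-adjacent pair in which b, c and d all switch: cost 3 > 2. *)

Section Adjacency.
Variable k : nat.
Implicit Types (v w u : dvec k) (s t : 'I_k).

Lemma st_adjacent_sum s t v w :
  st_adjacent s t v w -> \sum_(j < k) w j = \sum_(j < k) v j.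
Proof.
move=> [st [vs [ws [wt oth]]]].
have ts : t != s by rewrite eq_sym.
rewrite (bigD1 s) // [RHS](bigD1 s) //= (bigD1 t) //= [in RHS](bigD1 t) //=.
rewrite (eq_bigr v) => [|j /andP [js jt]]; last by rewrite oth.
by rewrite ws wt addSn addnS -addSn prednK.
Qed.

Lemma st_adjacent_demand n s t v w :
  st_adjacent s t v w -> is_demand n v -> is_demand n w.
Proof. by move=> adj; rewrite /is_demand (st_adjacent_sum adj). Qed.

Lemma st_adjacent_l1 s t v w : st_adjacent s t v w -> adjacent v w.
Proof.
move=> [st [vs [ws [wt oth]]]].
have ts : t != s by rewrite eq_sym.
rewrite /adjacent /l1dist (bigD1 s) //= (bigD1 t) //= big1 => [|j /andP [js jt]].
  by rewrite ws wt; lia.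
by rewrite oth // maxnn minnn subnn.
Qed.

Lemma st_adjacent_exists s t v :
  s != t -> 0 < v s -> exists u, st_adjacent s t v u.
Proof.
move=> st vs.
have ts : (t == s) = false by rewrite eq_sym; apply/negbTE.
exists [ffun p => if p == s then (v s).-1 else if p == t then (v t).+1 else v p].
do 4! (split; rewrite ?ffunE ?eqxx ?ts //).
by move=> p ps pt; rewrite ffunE (negbTE ps) (negbTE pt).
Qed.

Lemma st_adjacent_change_source s i t v w u :
  s != i -> st_adjacent i t v w -> st_adjacent s t v u -> st_adjacent s i w u.
Proof.
move=> si [it [vi [wi [wt woth]]]] [st [vs [us [ut uoth]]]].
split=> //; split; first by rewrite woth.
split; first by rewrite us woth.
have i_s : i != s by rewrite eq_sym.
split; first by rewrite uoth // wi prednK.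
move=> p ps pi; case: (eqVneq p t) => [->|pt]; first by rewrite ut wt.
by rewrite uoth // woth.
Qed.

End Adjacency.

(* Combinatorial core of a cost-2 move: two agents switching x0 -> x1 and
   y0 -> t whose task counts absorb a unit of demand moved from i to t
   (the identity below, read as task multiplicities) must form a chain
   i -> y0 -> t through a task y0 <> i. *)
Lemma two_agent_exchange (T : eqType) (i t x0 x1 y0 : T) :
  i != t -> x0 != x1 -> y0 != t ->
  (forall p, (x0 == p) + (y0 == p) + (p == t) = (x1 == p) + (t == p) + (p == i)) ->
  [/\ x0 = i, x1 = y0 & y0 != i].
Proof.
move=> it x01 y0t bal.
have ti : (t == i) = false by rewrite eq_sym; apply/negbTE.
case: (eqVneq x0 i) => [x0i | x0i]; last first.
  have := bal x0; rewrite eqxx (eq_sym x1) (negbTE x01) (negbTE x0i) (eq_sym t).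
  by case: (y0 == x0); case: (x0 == t).
subst x0.
have x1i : (x1 == i) = false by rewrite eq_sym; apply/negbTE.
have y0i : y0 != i.
  by apply/negP => /eqP y0i; have := bal i; rewrite eqxx ti x1i y0i eqxx.
split=> //.
have := bal y0; rewrite eqxx (eq_sym t) (negbTE y0t) (negbTE y0i) eq_sym (negbTE y0i).
by case: (x1 =P y0).
Qed.

Section SwitchingAgents.
Variables (n k : nat) (f : alloc n k).
Implicit Types (v w : dvec k) (s t p : 'I_k) (x y z : 'I_n).

Definition switching v w : {set 'I_n} := [set a | f a v != f a w].

Lemma sw_costE v w : sw_cost f v w = #|switching v w|.
Proof. by []. Qed.

Lemma card_assignedE v p :
  #|[set a | f a v == p]| = \sum_(a < n) (f a v == p).
Proof.
rewrite -sum1dep_card big_mkcond /=; apply: eq_bigr => a _.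
by case: (f a v == p).
Qed.

Lemma demand_shift s t v w :
  satisfies_demand f -> is_demand n v -> st_adjacent s t v w ->
  forall p, #|[set a | f a w == p]| + (p == s) = #|[set a | f a v == p]| + (p == t).
Proof.
move=> sd dem_v adj p; have dem_w := st_adjacent_demand adj dem_v.
rewrite (sd v dem_v) (sd w dem_w); case: adj => [st [vs [ws [wt oth]]]].
case: (eqVneq p s) => [-> | ps]; first by rewrite ws (negbTE st); lia.
case: (eqVneq p t) => [-> | pt]; first by rewrite wt; lia.
by rewrite oth.
Qed.

Lemma sw_cost_pos s t v w :
  satisfies_demand f -> is_demand n v -> st_adjacent s t v w ->
  0 < sw_cost f v w.
Proof.
move=> sd dem_v adj; rewrite lt0n sw_costE cards_eq0; apply/negP => /eqP none.
have fixed x : f x w = f x v.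
  have : x \notin switching v w by rewrite none inE.
  by rewrite inE negbK eq_sym => /eqP.
have := demand_shift sd dem_v adj t; rewrite eqxx eq_sym (negbTE adj.1).
by under eq_finset => x do rewrite fixed; lia.
Qed.

Lemma sw_cost2_others_fixed v w x y :
  sw_cost f v w = 2 -> x != y -> f x v != f x w -> f y v != f y w ->
  forall z, z != x -> z != y -> f z w = f z v.
Proof.
move=> sw xy xsw ysw z zx zy.
have sub : [set x; y] \subset switching v w.
  by apply/subsetP => a; rewrite !inE => /orP [] /eqP ->.
have eqS : [set x; y] = switching v w.
  by apply/eqP; rewrite eqEcard sub cards2 xy -sw_costE sw.
have : z \notin switching v w by rewrite -eqS !inE negb_or zx zy.
by rewrite inE negbK eq_sym => /eqP.
Qed.

Lemma sw_cost_gt2 v w x y z :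
  x != y -> y != z -> z != x ->
  f x v != f x w -> f y v != f y w -> f z v != f z w -> 2 < sw_cost f v w.
Proof.
move=> xy yz zx xsw ysw zsw; rewrite sw_costE; apply/card_gt2P.
by exists x, y, z; rewrite !inE.
Qed.

End SwitchingAgents.

Section CostTwoMoves.
Variables (n k : nat) (f : alloc n k).
Hypothesis demand_ok : satisfies_demand f.
Implicit Types (v w u : dvec k) (i t p : 'I_k) (x y z : 'I_n).

Definition exchange_via v w i t j c d : Prop :=
  [/\ j != i, j != t, f c v = i /\ f c w = j, f d v = j /\ f d w = t
    & forall z, z != c -> z != d -> f z w = f z v].

Lemma card_assigned_split u p x y : x != y ->
  #|[set a | f a u == p]| =
  (f x u == p) + (f y u == p) + \sum_(a < n | (a != x) && (a != y)) (f a u == p).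
Proof.
by move=> xy; rewrite card_assignedE (bigD1 x) // (bigD1 y) 1?eq_sym //= addnA.
Qed.

Lemma two_switcher_balance i t v w x y :
  is_demand n v -> st_adjacent i t v w -> x != y ->
  (forall z, z != x -> z != y -> f z w = f z v) ->
  forall p, (f x v == p) + (f y v == p) + (p == t) = (f x w == p) + (f y w == p) + (p == i).
Proof.
move=> dem_v adj xy fixed p; have := demand_shift demand_ok dem_v adj p.
have same_rest : \sum_(a < n | (a != x) && (a != y)) (f a w == p) =
                 \sum_(a < n | (a != x) && (a != y)) (f a v == p).
  by apply: eq_bigr => a /andP [ax ay]; rewrite fixed.
by rewrite !(card_assigned_split _ _ xy) same_rest; lia.
Qed.

Lemma cost2_exchange i t v w :
  is_demand n v -> st_adjacent i t v w -> sw_cost f v w = 2 ->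
  exists j c d, exchange_via v w i t j c d.
Proof.
move=> dem_v adj sw; have it : i != t := adj.1.
have /cards2P [x [y [xy eqS]]] : #|switching f v w| == 2 by rewrite -sw_costE sw.
have switches z : z \in [set x; y] -> f z v != f z w by rewrite -eqS inE.
have xsw := switches x (set21 x y); have ysw := switches y (set22 x y).
have fixed := sw_cost2_others_fixed sw xy xsw ysw.
have bal := two_switcher_balance dem_v adj xy fixed.
clear switches eqS.
wlog yt : x y xy xsw ysw fixed bal / f y w = t.
  move=> gen; have := bal t; rewrite eqxx (eq_sym t i) (negbTE it).
  case: (eqVneq (f y w) t) => [yt | yt] balt; first exact: (gen x y).
  case: (eqVneq (f x w) t) => [xt | xt]; last by move: balt; rewrite (negbTE xt) addn1.
  apply: (gen y x) => //; first by rewrite eq_sym.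
    by move=> z zy zx; apply: fixed.
  by move=> p; rewrite (addnC (f y v == p)) (addnC (f y w == p)).
have y0t : f y v != t by rewrite -yt.
have [xi xwy yi] : [/\ f x v = i, f x w = f y v & f y v != i].
  by apply: (@two_agent_exchange _ i t) => // p; have := bal p; rewrite yt.
by exists (f y v), x, y.
Qed.

End CostTwoMoves.

Lemma agents_neq n k (f : alloc n k) (v : dvec k) (x y : 'I_n) (p q : 'I_k) :
  f x v = p -> f y v = q -> p != q -> x != y.
Proof. by move=> <- <-; apply: contra_neq => ->. Qed.

Lemma type2_forbids_exchange n k (f : alloc n k) (v w : dvec k) (t i j s : 'I_k)
    (c d : 'I_n) :
  max_sw_cost_le f 2 -> is_demand n v -> type2_with f v t i ->
  st_adjacent i t v w -> exchange_via f v w i t j c d ->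
  s != i -> s != t -> s != j -> 0 < v s -> False.
Proof.
move=> mx dem_v [a type2] adj [ji jt [c_v c_w] [d_v d_w] fixed] si st sj vs.
have [u adj_u] := st_adjacent_exists st vs.
have [sw_u [_ [_ [[b [b_v [b_u _]]] [a_v [a_u _]]]]]] := type2 s si st vs u adj_u.
have i_s : i != s by rewrite eq_sym.
have ab := agents_neq a_v b_v i_s.
have a_sw : f a v != f a u by rewrite a_v a_u; exact: adj.1.
have b_sw : f b v != f b u by rewrite b_v b_u.
have fixed_u := sw_cost2_others_fixed sw_u ab a_sw b_sw.
have adj_wu := st_adjacent_change_source si adj adj_u.
have dem_w := st_adjacent_demand adj dem_v.
have := mx w u dem_w (st_adjacent_demand adj_u dem_v) (st_adjacent_l1 adj_wu).
suff : 2 < sw_cost f w u by lia.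
have [ij js] : i != j /\ j != s by split; rewrite eq_sym.
have bc := agents_neq b_v c_v si.
have bd := agents_neq b_v d_v sj.
have cd := agents_neq c_v d_v ij.
have db := agents_neq d_v b_v js.
have da := agents_neq d_v a_v ji.
have cb : c != b by rewrite eq_sym.
apply: (sw_cost_gt2 (x := b) (y := c) (z := d)) => //.
- by rewrite fixed // b_v b_u.
- rewrite c_w; case: (eqVneq c a) => [-> | ca]; first by rewrite a_u.
  by rewrite fixed_u // c_v eq_sym.
- by rewrite d_w fixed_u // d_v eq_sym.
Qed.

Theorem lemma4p3 (n k : nat) (f : alloc n k) :
  4 <= n -> 5 <= k -> satisfies_demand f -> max_sw_cost_le f 2 ->
  forall (v : dvec k) (t i s1 s2 : 'I_k),
    is_demand n v ->
    type2_with f v t i ->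
    s1 != s2 -> s1 != t -> s1 != i -> s2 != t -> s2 != i ->
    0 < v s1 -> 0 < v s2 ->
    forall v' : dvec k, st_adjacent i t v v' -> sw_cost f v v' = 1.
Proof.
move=> _ _ sd mx v t i s1 s2 dem_v type2 s12 s1t s1i s2t s2i vs1 vs2 w adj.
have pos := sw_cost_pos sd dem_v adj.
have le2 := mx v w dem_v (st_adjacent_demand adj dem_v) (st_adjacent_l1 adj).
suff sw_ne2 : sw_cost f v w != 2 by lia.
apply/eqP => sw2; have [j [c [d exch]]] := cost2_exchange sd dem_v adj sw2.
case: (eqVneq s1 j) => [s1j | s1j].
- apply: (type2_forbids_exchange mx dem_v type2 adj exch s2i s2t) => //.
  by rewrite -s1j eq_sym.
- exact: (type2_forbids_exchange mx dem_v type2 adj exch s1i s1t).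
Qed.
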